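(* Let $\mathfrak g=\mathfrak r_3$ (basis $\{e_1,e_2,e_3\}$, nonzero brackets $[e_1,e_2]=e_2+e_3$, $[e_1,e_3]=e_3$). Then the action of $\mathbb R^\times\mathrm{Aut}(\mathfrak g)$ on $\mathcal M(\mathfrak g)=\mathrm{GL}_3(\mathbb R)/\mathrm{O}(3)$ (with the natural Riemannian metric) is of cohomogeneity one, and all orbits are isometrically congruent to each other.
   Context: Identify $\mathfrak g\cong\mathbb R^3$ via the basis. $\mathcal M(\mathfrak g)$ is the set of inner products on $\mathfrak g$, with transitive $\mathrm{GL}_3(\mathbb R)$-action $g.\langle\cdot,\cdot\rangle=\langle g^{-1}\cdot,g^{-1}\cdot\rangle$, so $\mathcal M(\mathfrak g)=\mathrm{GL}_3(\mathbb R)/\mathrm{O}(3)$. The natural Riemannian metric is the $\mathrm{GL}_3(\mathbb R)$-invariant metric corresponding to $\langle X,Y\rangle=\mathrm{tr}(XY)$ on $\mathrm{sym}(3)$ (reductive complement $\mathfrak{gl}_3=\mathfrak o(3)\oplus\mathrm{sym}(3)$). $\mathbb R^\times\mathrm{Aut}(\mathfrak g)=\{c\varphi:c\ne0,\ \varphi\in\mathrm{Aut}(\mathfrak g)\}\subset\mathrm{GL}_3(\mathbb R)$ acts isometrically by restriction. An isometric action is of cohomogeneity one if its orbits of maximal dimension have codimension one. Two orbits are isometrically congruent if some isometry of the ambient space maps one onto the other. *)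

From HB Require Import structures.
From mathcomp Require Import all_boot all_order all_algebra.
From mathcomp Require Import all_classical all_reals all_analysis.
Set Implicit Arguments. Unset Strict Implicit. Unset Printing Implicit Defensive.
Import Order.TTheory GRing.Theory Num.Theory.
Local Open Scope ring_scope.
Local Open Scope classical_set_scope.

Section R3.
Variable R : realType.

(* Lie bracket of r_3 in the basis e1,e2,e3 (indices 0,1,2), on coordinate
   column vectors: [e1,e2] = e2 + e3, [e1,e3] = e3, [e2,e3] = 0. *)
Definition r3_bracket (x y : 'cV[R]_3) : 'cV[R]_3 :=
  let a := x 0 0 * y 1 0 - x 1 0 * y 0 0 in
  let b := x 0 0 * y 2%:R 0 - x 2%:R 0 * y 0 0 in
  \col_i (if i == 0 :> 'I_3 then 0 else if i == 1 :> 'I_3 then a else a + b).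

Definition is_aut (A : 'M[R]_3) : Prop :=
  A \in unitmx /\
  forall x y : 'cV[R]_3, A *m r3_bracket x y = r3_bracket (A *m x) (A *m y).

Definition RAut (g : 'M[R]_3) : Prop :=
  exists c : R, exists A : 'M[R]_3, c != 0 /\ is_aut A /\ g = c *: A.

(* M(g): inner products, represented by their Gram matrices P
   (<x,y> = x^T P y): symmetric positive definite matrices. *)
Definition inner_products (P : 'M[R]_3) : Prop :=
  P^T = P /\ forall x : 'cV[R]_3, x != 0 -> 0 < (x^T *m P *m x) 0 0.

(* g.<.,.> = <g^-1 ., g^-1 .> *)
Definition gl_act (g P : 'M[R]_3) : 'M[R]_3 := (invmx g)^T *m P *m invmx g.

Definition RAut_orbit (P : 'M[R]_3) : set 'M[R]_3 := [set gl_act g P | g in RAut].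

(* natural GL_3-invariant Riemannian nat_metric on M(g): at P, for symmetric
   tangent vectors V, W; at the identity it corresponds to tr(XY) on sym(3)
   via X |-> d/dt exp(tX).I = -2X. *)
Definition nat_metric (P V W : 'M[R]_3) : R :=
  \tr (invmx P *m V *m invmx P *m W) / 4%:R.

Definition smooth_fun (f : R -> R) : Prop :=
  forall (n : nat) (t : R), derivable (derive1n n f) t 1.
Definition smooth_curve (c : R -> 'M[R]_3) : Prop :=
  forall i j, smooth_fun (fun t => c t i j).
Definition velocity (c : R -> 'M[R]_3) (t : R) : 'M[R]_3 :=
  \matrix_(i, j) derive1 (fun s => c s i j) t.

Definition tangent_vectors (S : set 'M[R]_3) (P : 'M[R]_3) : set 'M[R]_3 :=
  [set V | exists c : R -> 'M[R]_3,
     smooth_curve c /\ (forall t, S (c t)) /\ c 0 = P /\ velocity c 0 = V].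

Definition dim_at (S : set 'M[R]_3) (P : 'M[R]_3) (k : nat) : Prop :=
  (exists s : seq 'M[R]_3, size s = k /\ free s /\
      forall V, V \in s -> tangent_vectors S P V) /\
  (forall s : seq 'M[R]_3, free s -> (forall V, V \in s -> tangent_vectors S P V) ->
      (size s <= k)%N).

Definition cohomogeneity_one : Prop :=
  exists P, exists m : nat, exists n : nat,
    inner_products P /\ dim_at (RAut_orbit P) P m /\ dim_at inner_products P n /\
    (forall Q k, inner_products Q -> dim_at (RAut_orbit Q) Q k -> (k <= m)%N) /\
    m.+1 = n.

Definition smooth_on_M (F : 'M[R]_3 -> 'M[R]_3) : Prop :=
  forall c, smooth_curve c -> (forall t, inner_products (c t)) ->
    smooth_curve (F \o c).

Definition M_isometry (F : 'M[R]_3 -> 'M[R]_3) : Prop :=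
  exists G : 'M[R]_3 -> 'M[R]_3,
    (forall P, inner_products P -> inner_products (F P)) /\
    (forall P, inner_products P -> inner_products (G P)) /\
    (forall P, inner_products P -> G (F P) = P) /\
    (forall P, inner_products P -> F (G P) = P) /\
    smooth_on_M F /\ smooth_on_M G /\
    (forall c, smooth_curve c -> (forall t, inner_products (c t)) -> forall t,
       nat_metric (F (c t)) (velocity (F \o c) t) (velocity (F \o c) t)
       = nat_metric (c t) (velocity c t) (velocity c t)).

Definition isom_congruent (S T : set 'M[R]_3) : Prop :=
  exists F, M_isometry F /\ F @` S = T.

End R3.

(* R^x Aut(r_3) consists exactly of the invertible lower-triangular matrices g with
   g_22 = g_33.  Every inner product is X^T X for an invertible lower-triangular X
   (Cholesky), and congruence by such an X is an isometry of M(g) that conjugates the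
   group into itself, so it maps the orbit of the identity onto the orbit of X^T X:
   all orbits are congruent.  Along an orbit the ratio of the lower-right 2x2 minor to
   the square of the (3,3) entry is constant, so orbit tangent vectors lie in a
   5-dimensional space of symmetric matrices, while five explicit polynomial curves
   through the identity realise five independent ones; M(g) itself is 6-dimensional. *)

From HB Require Import structures.
From mathcomp Require Import all_boot all_order all_algebra.
From mathcomp Require Import all_classical all_reals all_analysis.
From mathcomp Require Import ring lra.
Set Implicit Arguments. Unset Strict Implicit. Unset Printing Implicit Defensive.
Import Order.TTheory GRing.Theory Num.Theory.
Local Open Scope ring_scope.
Local Open Scope classical_set_scope.

Definition i0 : 'I_3 := 0.
Definition i1 : 'I_3 := 1.
Definition i2 : 'I_3 := 2%:R.

Lemma ord3P (i : 'I_3) : [\/ i = i0, i = i1 | i = i2].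
Proof.
by case: i => [[|[|[|m]]] lt_m3]; [apply: Or31|apply: Or32|apply: Or33|]; try apply/val_inj.
Qed.

Local Ltac case3 i := let E := fresh in case: (ord3P i) => E; subst i.

Lemma mulmx3E (T : pzSemiRingType) m n (A : 'M[T]_(m, 3)) (B : 'M[T]_(3, n)) i j :
  (A *m B) i j = A i i0 * B i0 j + A i i1 * B i1 j + A i i2 * B i2 j.
Proof.
rewrite mxE !big_ord_recr big_ord0 /= add0r.
by congr (A i _ * B _ j + A i _ * B _ j + A i _ * B _ j); apply/val_inj.
Qed.

Lemma mxtrace3E (T : pzSemiRingType) (A : 'M[T]_3) : \tr A = A i0 i0 + A i1 i1 + A i2 i2.
Proof.
rewrite /mxtrace !big_ord_recr big_ord0 /= add0r.
by congr (A _ _ + A _ _ + A _ _); apply/val_inj.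
Qed.

Lemma sym_mxE (T : Type) n (A : 'M[T]_n) i j : A^T = A -> A j i = A i j.
Proof. by move=> sA; rewrite -{1}sA mxE. Qed.

Definition mx3 (T : zmodType) (a b c d e f g h k : T) : 'M[T]_3 :=
  \matrix_(i, j) (nth [::] [:: [:: a; b; c]; [:: d; e; f]; [:: g; h; k]] i)`_j.

Definition col3 (T : zmodType) (a b c : T) : 'cV[T]_3 := \col_i [:: a; b; c]`_i.

Lemma trig3P (T : zmodType) (A : 'M[T]_3) :
  reflect [/\ A i0 i1 = 0, A i0 i2 = 0 & A i1 i2 = 0] (is_trig_mx A).
Proof.
apply: (iffP is_trig_mxP) => [tA|[t01 t02 t12] i j]; first by split; apply: tA.
by case3 i; case3 j.
Qed.

Lemma col3_eq0 (K : fieldType) (a b c : K) :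
  (col3 a b c == 0) = [&& a == 0, b == 0 & c == 0].
Proof.
apply/eqP/and3P => [E|[/eqP-> /eqP-> /eqP->]].
  by split; apply/eqP; [move/colP/(_ i0): E|move/colP/(_ i1): E|move/colP/(_ i2): E];
     rewrite !mxE.
by apply/colP => i; rewrite !mxE; case3 i.
Qed.

Lemma quadform3E (T : comPzRingType) (x : 'cV[T]_3) (P : 'M[T]_3) :
  (x^T *m P *m x) 0 0 =
  x i0 0 * (P i0 i0 * x i0 0 + P i0 i1 * x i1 0 + P i0 i2 * x i2 0) +
  x i1 0 * (P i1 i0 * x i0 0 + P i1 i1 * x i1 0 + P i1 i2 * x i2 0) +
  x i2 0 * (P i2 i0 * x i0 0 + P i2 i1 * x i1 0 + P i2 i2 * x i2 0).
Proof. by rewrite -mulmxA !mulmx3E !mxE. Qed.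

Section Triangular.
Variables (K : fieldType) (n : nat).
Implicit Types A B : 'M[K]_n.

Lemma trig_mulmx A B : is_trig_mx A -> is_trig_mx B -> is_trig_mx (A *m B).
Proof.
move=> /is_trig_mxP tA /is_trig_mxP tB; apply/is_trig_mxP => i j lt_ij.
rewrite mxE big1 // => k _; have [/tA->|le_ki] := ltnP i k; first by rewrite mul0r.
by rewrite tB ?mulr0 // (leq_ltn_trans le_ki).
Qed.

Lemma trig_mulmx_diag A B i :
  is_trig_mx A -> is_trig_mx B -> (A *m B) i i = A i i * B i i.
Proof.
move=> /is_trig_mxP tA /is_trig_mxP tB; rewrite mxE (bigD1 i) //= big1 ?addr0 //.
move=> k /negPf neq_ki; have [/tA->|/tB->|/val_inj eq_ik] := ltngtP i k.
- by rewrite mul0r.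
- by rewrite mulr0.
- by rewrite eq_ik eqxx in neq_ki.
Qed.

Lemma trig_unitmx A : is_trig_mx A -> (A \in unitmx) = [forall i, A i i != 0].
Proof.
move=> tA; rewrite unitmxE det_trig // unitfE.
by apply/prodf_neq0/forallP => [h i|h i _]; apply: h.
Qed.

Lemma trig_invmx A : A \in unitmx -> is_trig_mx A -> is_trig_mx (invmx A).
Proof.
move=> uA tA; have /forallP diagA : [forall i, A i i != 0] by rewrite -trig_unitmx.
move/is_trig_mxP: tA => tA; apply/is_trig_mxP => i j.
(* Induction on i: (A *m invmx A) i j only involves the entries invmx A k j with k <= i. *)
have [m lt_im] := ubnP i; elim: m => // m IHm in i lt_im *; move=> lt_ij.
have := congr1 (fun M : 'M[K]_n => M i j) (mulmxV uA).
rewrite !mxE (bigD1 i) //= big1 => [|k neq_ki].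
  rewrite addr0 -val_eqE (ltn_eqF lt_ij) mulr0n => /eqP.
  by rewrite mulf_eq0 (negPf (diagA i)) => /eqP.
have [lt_ik|lt_ki|/val_inj eq_ik] := ltngtP i k.
- by rewrite tA ?mul0r.
- by rewrite IHm ?mulr0 //; [exact: leq_trans lt_ki (ltnSE lt_im) | exact: ltn_trans lt_ij].
- by rewrite eq_ik eqxx in neq_ki.
Qed.

Lemma trig_scalemx a A : is_trig_mx A -> is_trig_mx (a *: A).
Proof. by move=> /is_trig_mxP tA; apply/is_trig_mxP => i j /tA Aij; rewrite mxE Aij mulr0. Qed.

Lemma trig_invmx_diag A i :
  A \in unitmx -> is_trig_mx A -> invmx A i i = (A i i)^-1.
Proof.
move=> uA tA; have /forallP/(_ i) nzA : [forall i, A i i != 0] by rewrite -trig_unitmx.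
have := trig_mulmx_diag i tA (trig_invmx uA tA).
rewrite mulmxV // mxE eqxx /= => /esym AiiV.
by rewrite -[LHS](mulKf nzA) AiiV mulr1.
Qed.

End Triangular.

Lemma invmxM (K : comUnitRingType) n (A B : 'M[K]_n) :
  A \in unitmx -> B \in unitmx -> invmx (A *m B) = invmx B *m invmx A.
Proof.
move=> uA uB; have uAB : A *m B \in unitmx by rewrite unitmx_mul uA.
have AB_inv : A *m B *m (invmx B *m invmx A) = 1%:M.
  by rewrite mulmxA -(mulmxA A) mulmxV // mulmx1 mulmxV.
by rewrite -[RHS](mulKmx uAB) AB_inv mulmx1.
Qed.

Section SmoothFunctions.
Variable R : realType.
Implicit Types (f g : R -> R) (t : R).

Lemma lincomb_fctE n (a : 'I_n -> R) (f : 'I_n -> R -> R) :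
  (fun s => \sum_k a k * f k s) = \sum_k a k *: f k.
Proof. by rewrite fct_sumE. Qed.

Lemma derivable_lincomb n (a : 'I_n -> R) (f : 'I_n -> R -> R) t :
  (forall k, derivable (f k) t 1) -> derivable (fun s => \sum_k a k * f k s) t 1.
Proof. by move=> df; rewrite lincomb_fctE; apply: derivable_sum => k; apply: derivableZ. Qed.

Lemma derive1_lincomb n (a : 'I_n -> R) (f : 'I_n -> R -> R) t :
  (forall k, derivable (f k) t 1) ->
  derive1 (fun s => \sum_k a k * f k s) t = \sum_k a k * derive1 (f k) t.
Proof.
move=> df; rewrite lincomb_fctE derive1E derive_sum => [|k]; last exact: derivableZ.
by apply: eq_bigr => k _; rewrite deriveZ // derive1E.
Qed.

Lemma smooth_lincomb n (a : 'I_n -> R) (f : 'I_n -> R -> R) :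
  (forall k, smooth_fun (f k)) -> smooth_fun (fun s => \sum_k a k * f k s).
Proof.
move=> sf m; suff -> : derive1n m (fun s => \sum_k a k * f k s) =
                      (fun s => \sum_k a k * derive1n m (f k) s).
  by move=> t; apply: derivable_lincomb => k; apply: sf.
elim: m => // m IHm; rewrite derive1nS IHm; apply/funext => t.
by rewrite derive1_lincomb // => k; apply: sf.
Qed.

Lemma derive1M f g t : derivable f t 1 -> derivable g t 1 ->
  derive1 (fun s => f s * g s) t = derive1 f t * g t + f t * derive1 g t.
Proof.
move=> df dg; rewrite !derive1E -[fun s => _]/(f * g) (deriveM df dg) addrC.
by rewrite [_ *: 'D_1 f t]mulrC.
Qed.

Lemma derivable1M f g t : derivable f t 1 -> derivable g t 1 ->
  derivable (fun s => f s * g s) t 1.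
Proof. exact: derivableM. Qed.

Lemma derivable1Ml f a t : derivable f t 1 -> derivable (fun s => a * f s) t 1.
Proof. exact: derivableZ. Qed.

Lemma derivable1B f g t : derivable f t 1 -> derivable g t 1 ->
  derivable (fun s => f s - g s) t 1.
Proof. exact: derivableB. Qed.

Lemma derive1B f g t : derivable f t 1 -> derivable g t 1 ->
  derive1 (fun s => f s - g s) t = derive1 f t - derive1 g t.
Proof. by move=> df dg; rewrite !derive1E -[fun s => _]/(f - g) deriveB. Qed.

Lemma smooth_horner (p : {poly R}) : smooth_fun (horner p).
Proof.
move=> m t; suff -> : derive1n m (horner p) = horner (iter m (@deriv R) p).
  exact: derivable_horner.
by elim: m => // m IHm; rewrite derive1nS IHm /= derivE.
Qed.

End SmoothFunctions.

Section LinearIndependence.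
Variable K : fieldType.

Lemma free_entry_witness m p q (s : m.-tuple 'M[K]_(p, q)) (e : 'I_m -> 'I_p * 'I_q) :
  (forall i j : 'I_m, (s`_j (e i).1 (e i).2 != 0) = (i == j)) -> free s.
Proof.
move=> se; apply/freeP => k sum0 i; have /matrixP/(_ (e i).1 (e i).2) := sum0.
rewrite summxE (bigD1 i) //= big1 => [|j /negPf nji]; last first.
  by rewrite mxE; move: (se i j); rewrite [i == j]eq_sym nji => /negbFE/eqP->; rewrite mulr0.
have nz : s`_i (e i).1 (e i).2 != 0 by rewrite se.
by rewrite !mxE addr0 => /eqP; rewrite mulf_eq0 (negPf nz) orbF => /eqP.
Qed.

Variable p : nat.
Implicit Types V W : 'M[K]_p.

Definition sym_perp W V := V^T = V /\ \tr (W *m V) = 0.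

Lemma sym_perp_lincomb W m (s : m.-tuple 'M[K]_p) (k : 'I_m -> K) :
  (forall V, V \in s -> sym_perp W V) -> sym_perp W (\sum_(i < m) k i *: s`_i).
Proof.
move=> sW; have sWi (i : 'I_m) : sym_perp W s`_i by apply/sW/mem_nth; rewrite size_tuple.
split.
  rewrite raddf_sum; apply: eq_bigr => i _.
  by rewrite -[in RHS](sWi i).1; apply/matrixP => a b; rewrite !mxE.
by rewrite mulmx_sumr raddf_sum big1 // => i _ /=; rewrite -scalemxAr mxtraceZ (sWi i).2 mulr0.
Qed.

Lemma sym_perp_free_size W n (idx : 'I_n -> 'I_p * 'I_p) (s : seq 'M[K]_p) :
  (forall V, sym_perp W V -> (forall j, V (idx j).1 (idx j).2 = 0) -> V = 0) ->
  free s -> (forall V, V \in s -> sym_perp W V) -> (size s <= n)%N.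
Proof.
move=> coordsK; have [t ->] : {t : (size s).-tuple 'M[K]_p | s = t} by exists (in_tuple s).
move=> ft tW; pose phi V : 'rV[K]_n := \row_j V (idx j).1 (idx j).2.
suff /eqP dimE : free (map phi t).
  by rewrite -(size_map phi) -dimE (leq_trans (dimvS (subvf _))) // dimvf /dim /= mul1n.
rewrite -[map _ _]/(val (map_tuple phi t)); apply/freeP => k sum0.
move/freeP: ft; apply; apply: coordsK => [|j]; first exact: sym_perp_lincomb.
have /rowP/(_ j) := sum0; rewrite summxE mxE => sum0j.
rewrite -[RHS]sum0j summxE; apply: eq_bigr => i _.
by rewrite !mxE (nth_map 0) ?size_tuple // !mxE.
Qed.

End LinearIndependence.

Lemma deriv_mulmx (K : comNzRingType) n (A B : 'M[{poly K}]_n) :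
  map_mx deriv (A *m B) = map_mx deriv A *m B + A *m map_mx deriv B.
Proof.
apply/matrixP => i j; rewrite !mxE raddf_sum -big_split; apply: eq_bigr => k _.
by rewrite /= derivM !mxE.
Qed.

Section R3.
Variable R : realType.
Implicit Types (A B g M N P Q V X : 'M[R]_3) (x y : 'cV[R]_3) (c : R -> 'M[R]_3).

Lemma r3_bracketE x y : r3_bracket x y =
  col3 0 (x i0 0 * y i1 0 - x i1 0 * y i0 0)
         (x i0 0 * y i1 0 - x i1 0 * y i0 0 + (x i0 0 * y i2 0 - x i2 0 * y i0 0)).
Proof. by apply/colP => i; rewrite !mxE; case3 i. Qed.

Lemma is_autP A : is_aut A <->
  [/\ A \in unitmx, is_trig_mx A, A i0 i0 = 1 & A i1 i1 = A i2 i2].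
Proof.
split=> [[uA hom]|[uA /trig3P[t01 t02 t12] a00 a11]]; last first.
  split=> // x y; apply/colP => i.
  by rewrite !r3_bracketE !mulmx3E !mxE; case3 i;
     rewrite /= ?t01 ?t02 ?t12 ?a00 ?a11; ring.
(* Evaluate the homomorphism property on [e1, e2] = e2 + e3 and [e1, e3] = e3. *)
have /colP E12 := hom (col3 1 0 0) (col3 0 1 0).
have /colP E13 := hom (col3 1 0 0) (col3 0 0 1).
move: (E12 i0) (E12 i1) (E12 i2) (E13 i0) (E13 i1) (E13 i2) => {E12 E13}.
rewrite !r3_bracketE !mulmx3E !mxE /=.
rewrite !(mulr0, mulr1, mul0r, mul1r, addr0, add0r, subr0, sub0r).
move=> e0 _ e2 t02 f1 f2; rewrite t02 addr0 in e0.
rewrite t02 e0 !(mulr0, subr0, addr0) in e2 f1 f2.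
have f1' : A i1 i2 * (1 - A i0 i0) = 0 by rewrite mulrBr mulr1 mulrC -f1 subrr.
have f2' : A i2 i2 * (1 - A i0 i0) = A i0 i0 * A i1 i2.
  by apply/eqP; rewrite mulrBr mulr1 subr_eq [A i2 i2 * _]mulrC -f2.
have t12 : A i1 i2 = 0.
  have [a00|a00] := eqVneq (A i0 i0) 1; first by move: f2'; rewrite a00 subrr mulr0 mul1r.
  by move/eqP: f1'; rewrite mulf_eq0 subr_eq0 [1 == _]eq_sym (negPf a00) orbF => /eqP.
have tA : is_trig_mx A by exact/trig3P.
have /forallP/(_ i2) a22 : [forall i, A i i != 0] by rewrite -trig_unitmx.
have a00 : A i0 i0 = 1.
  by move/eqP: f2'; rewrite t12 mulr0 mulf_eq0 (negPf a22) subr_eq0 => /eqP.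
by split=> //; apply/esym; move: e2; rewrite a00 !mul1r addrC => /addIr.
Qed.

Lemma RAutP g : RAut g <-> [/\ g \in unitmx, is_trig_mx g & g i1 i1 = g i2 i2].
Proof.
split=> [[c [A [c0 [/is_autP[uA tA _ a11] ->]]]]|[ug tg g11]].
  by split; [rewrite unitmxZ ?unitfE | exact: trig_scalemx | rewrite !mxE a11].
have /forallP/(_ i0) g00 : [forall i, g i i != 0] by rewrite -trig_unitmx.
exists (g i0 i0), ((g i0 i0)^-1 *: g); split=> //; split; last first.
  by rewrite scalerA mulfV // scale1r.
apply/is_autP; split; first by rewrite unitmxZ // unitfE invr_eq0.
- exact: trig_scalemx.
- by rewrite mxE mulVf.
- by rewrite !mxE g11.
Qed.

Lemma RAut_conj N g : N \in unitmx -> is_trig_mx N -> RAut g -> RAut (invmx N *m g *m N).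
Proof.
move=> uN tN /RAutP[ug tg g11]; have tNi := trig_invmx uN tN.
have /forallP nzN : [forall i, N i i != 0] by rewrite -trig_unitmx.
apply/RAutP; split; first by rewrite !unitmx_mul unitmx_inv uN ug.
  by rewrite !trig_mulmx.
have conjK i (a : R) : (N i i)^-1 * a * N i i = a by rewrite mulrAC mulVf ?mul1r.
by rewrite !trig_mulmx_diag ?trig_mulmx // !trig_invmx_diag // !conjK.
Qed.

Lemma inner_products_congr P M :
  inner_products P -> M \in unitmx -> inner_products (M^T *m P *m M).
Proof.
move=> [sP pP] uM; split; first by rewrite !trmx_mul trmxK sP mulmxA.
move=> x x0; rewrite -[x^T *m _ *m x]/(x^T *m (M^T *m P *m M) *m x).
rewrite !mulmxA -trmx_mul -!mulmxA mulmxA; apply: pP.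
by apply: contra x0 => /eqP Mx0; rewrite -(mulKmx uM x) Mx0 mulmx0.
Qed.

Lemma inner_products_unitmx P : inner_products P -> P \in unitmx.
Proof.
move=> [_ pP]; rewrite unitmxE unitfE; apply/det0P => -[v v0 vP].
by have := pP v^T; rewrite trmx_eq0 trmxK vP mul0mx mxE ltxx => /(_ v0).
Qed.

Lemma gl_act_congr M g P : M \in unitmx -> g \in unitmx ->
  M^T *m gl_act g P *m M = gl_act (invmx M *m g *m M) (M^T *m P *m M).
Proof.
move=> uM ug; have uMi : invmx M \in unitmx by rewrite unitmx_inv.
rewrite /gl_act; have -> : invmx (invmx M *m g *m M) = invmx M *m invmx g *m M.
  by rewrite !invmxM ?unitmx_mul ?uMi // invmxK mulmxA.
have MtK : (invmx M)^T *m M^T = 1%:M by rewrite -trmx_mul mulmxV // trmx1.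
rewrite !trmx_mul !mulmxA -(mulmxA _ (invmx M)^T) MtK mulmx1.
by rewrite -(mulmxA _ M) mulmxV // mulmx1.
Qed.

Lemma RAut_orbit_congr M P : M \in unitmx -> is_trig_mx M ->
  (fun Q => M^T *m Q *m M) @` RAut_orbit P = RAut_orbit (M^T *m P *m M).
Proof.
move=> uM tM; apply/seteqP; split=> [_ [_ [g Rg <-] <-]|_ [g Rg <-]].
  have [ug _ _] := (RAutP g).1 Rg.
  by exists (invmx M *m g *m M); [apply: RAut_conj | rewrite gl_act_congr].
have [ug _ _] := (RAutP g).1 Rg; have uMi : invmx M \in unitmx by rewrite unitmx_inv.
have RgM : RAut (M *m g *m invmx M).
  by have := RAut_conj uMi (trig_invmx uM tM) Rg; rewrite invmxK.
exists (gl_act (M *m g *m invmx M) P); first by exists (M *m g *m invmx M).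
rewrite gl_act_congr ?unitmx_mul ?uM ?ug ?uMi //.
by rewrite -!mulmxA mulKmx // mulVmx // mulmx1.
Qed.

Lemma smooth_mulmxl A c : smooth_curve c -> smooth_curve (fun t => A *m c t).
Proof.
move=> sc i j; have -> : (fun t => (A *m c t) i j) = fun t => \sum_k A i k * c t k j.
  by apply/funext => t; rewrite mxE.
by apply: smooth_lincomb => k; apply: sc.
Qed.

Lemma smooth_mulmxr B c : smooth_curve c -> smooth_curve (fun t => c t *m B).
Proof.
move=> sc i j; have -> : (fun t => (c t *m B) i j) = fun t => \sum_k B k j * c t i k.
  by apply/funext => t; rewrite mxE; apply: eq_bigr => k _; rewrite mulrC.
by apply: smooth_lincomb => k; apply: sc.
Qed.

Lemma velocity_mulmxl A c t : smooth_curve c ->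
  velocity (fun s => A *m c s) t = A *m velocity c t.
Proof.
move=> sc; apply/matrixP => i j; rewrite !mxE.
have -> : (fun s => (A *m c s) i j) = fun s => \sum_k A i k * c s k j.
  by apply/funext => s; rewrite mxE.
rewrite derive1_lincomb => [|k]; last exact: (sc _ _ 0%N t).
by apply: eq_bigr => k _; rewrite mxE.
Qed.

Lemma velocity_mulmxr B c t : smooth_curve c ->
  velocity (fun s => c s *m B) t = velocity c t *m B.
Proof.
move=> sc; apply/matrixP => i j; rewrite !mxE.
have -> : (fun s => (c s *m B) i j) = fun s => \sum_k B k j * c s i k.
  by apply/funext => s; rewrite mxE; apply: eq_bigr => k _; rewrite mulrC.
rewrite derive1_lincomb => [|k]; last exact: (sc _ _ 0%N t).
by apply: eq_bigr => k _; rewrite mxE mulrC.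
Qed.

Lemma nat_metric_congr P V M : P \in unitmx -> M \in unitmx ->
  nat_metric (M^T *m P *m M) (M^T *m V *m M) (M^T *m V *m M) = nat_metric P V V.
Proof.
move=> uP uM; have uMt : M^T \in unitmx by rewrite unitmx_tr.
rewrite /nat_metric !invmxM ?unitmx_mul ?uMt ?uP // -!mulmxA !mulKmx // !mulKVmx //.
by rewrite mxtrace_mulC -!mulmxA mulmxV // mulmx1.
Qed.

Lemma congr_M_isometry M : M \in unitmx -> M_isometry (fun Q => M^T *m Q *m M).
Proof.
move=> uM; have uMi : invmx M \in unitmx by rewrite unitmx_inv.
have MtK : (invmx M)^T *m M^T = 1%:M by rewrite -trmx_mul mulmxV // trmx1.
have MtKV : M^T *m (invmx M)^T = 1%:M by rewrite -trmx_mul mulVmx // trmx1.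
exists (fun Q => (invmx M)^T *m Q *m invmx M).
split; first by move=> P pP; apply: inner_products_congr.
split; first by move=> P pP; apply: inner_products_congr.
split; first by move=> P _; rewrite !mulmxA MtK mul1mx -mulmxA mulmxV // mulmx1.
split; first by move=> P _; rewrite !mulmxA MtKV mul1mx -mulmxA mulVmx // mulmx1.
split; first by move=> c sc _; apply/smooth_mulmxr/smooth_mulmxl.
split; first by move=> c sc _; apply/smooth_mulmxr/smooth_mulmxl.
move=> c sc pc t; rewrite /comp velocity_mulmxr ?velocity_mulmxl //; last exact: smooth_mulmxl.
by rewrite nat_metric_congr //; apply: inner_products_unitmx.
Qed.

Definition minor12 A := A i1 i1 * A i2 i2 - A i1 i2 ^+ 2.

Lemma inner_products_diag_gt0 P i : inner_products P -> 0 < P i i.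
Proof.
move=> [_ pP]; have := pP (delta_mx i 0).
rewrite trmx_delta -rowE -colE !mxE; apply; apply/eqP => /matrixP/(_ i 0).
by rewrite !mxE !eqxx; apply/eqP/oner_neq0.
Qed.

Lemma inner_products_minor12_gt0 P : inner_products P -> 0 < minor12 P.
Proof.
move=> pdP; have p22_gt0 := inner_products_diag_gt0 i2 pdP.
have := pdP.2 (col3 0 (P i2 i2) (- P i1 i2)).
rewrite col3_eq0 (gt_eqF p22_gt0) andbF => /(_ isT).
rewrite quadform3E !mxE /= (sym_mxE i1 i2 pdP.1).
rewrite (_ : _ + _ = P i2 i2 * minor12 P); first by rewrite pmulr_rgt0.
by rewrite /minor12; ring.
Qed.

Lemma inner_products_cholesky P : inner_products P ->
  exists X, [/\ X \in unitmx, is_trig_mx X & P = X^T *m X].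
Proof.
move=> pdP; have sym i j := sym_mxE i j pdP.1.
have p22_gt0 := inner_products_diag_gt0 i2 pdP.
have D_gt0 := inner_products_minor12_gt0 pdP.
set x22 := Num.sqrt (P i2 i2); set x21 := P i1 i2 / x22; set x20 := P i0 i2 / x22.
set x11 := Num.sqrt (minor12 P / P i2 i2); set x10 := (P i0 i1 - x21 * x20) / x11.
have x22_gt0 : 0 < x22 by rewrite sqrtr_gt0.
have x11_gt0 : 0 < x11 by rewrite sqrtr_gt0 divr_gt0.
have x22E : x22 ^+ 2 = P i2 i2 by rewrite sqr_sqrtr // ltW.
have x11E : x11 ^+ 2 = minor12 P / P i2 i2 by rewrite sqr_sqrtr // ltW // divr_gt0.
have e22 : P i2 i2 = x22 ^+ 2 by [].
have e12 : P i1 i2 = x21 * x22 by rewrite /x21 divfK ?gt_eqF.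
have e02 : P i0 i2 = x20 * x22 by rewrite /x20 divfK ?gt_eqF.
have e11 : P i1 i1 = x11 ^+ 2 + x21 ^+ 2.
  by rewrite x11E /x21 /minor12 -x22E; field; rewrite gt_eqF.
have e01 : P i0 i1 = x10 * x11 + x20 * x21 by rewrite /x10 divfK ?gt_eqF // [x20 * _]mulrC subrK.
set r := P i0 i0 - x10 ^+ 2 - x20 ^+ 2.
have r_gt0 : 0 < r.
  (* u and w kill the last two coordinates of X *m col3 1 u w, so the form equals r there. *)
  set u := - x10 / x11; set w := - (x20 + x21 * u) / x22.
  have := pdP.2 (col3 1 u w); rewrite col3_eq0 oner_eq0 => /(_ isT).
  rewrite quadform3E !mxE /= (sym i0 i1) (sym i0 i2) (sym i1 i2) e22 e12 e02 e11 e01.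
  by congr (_ < _); rewrite /r /w /u; field; rewrite !gt_eqF.
set x00 := Num.sqrt r.
have x00_gt0 : 0 < x00 by rewrite sqrtr_gt0.
have x00E : x00 ^+ 2 = r by rewrite sqr_sqrtr // ltW.
have e00 : P i0 i0 = x00 ^+ 2 + x10 ^+ 2 + x20 ^+ 2 by rewrite x00E /r; ring.
exists (mx3 x00 0 0 x10 x11 0 x20 x21 x22).
have tX : is_trig_mx (mx3 x00 0 0 x10 x11 0 x20 x21 x22) by apply/trig3P; rewrite !mxE.
split=> //.
  by rewrite trig_unitmx //; apply/forallP => i; case3 i; rewrite mxE /= gt_eqF.
apply/matrixP => i j; rewrite mulmx3E !mxE.
by case3 i; case3 j; rewrite /= ?(sym i0 i1, sym i0 i2, sym i1 i2) ?e00 ?e01 ?e02 ?e11 ?e12 ?e22; ring.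
Qed.

Lemma RAut_orbits_isom_congruent P Q : inner_products P -> inner_products Q ->
  isom_congruent (RAut_orbit P) (RAut_orbit Q).
Proof.
move=> /inner_products_cholesky[X [uX tX ->]] /inner_products_cholesky[Y [uY tY ->]].
set M := invmx X *m Y.
have uM : M \in unitmx by rewrite unitmx_mul unitmx_inv uX.
have tM : is_trig_mx M by rewrite trig_mulmx ?trig_invmx.
exists (fun Q => M^T *m Q *m M); split; first exact: congr_M_isometry.
rewrite RAut_orbit_congr // /M trmx_mul !mulmxA -(mulmxA _ _ X^T) -trmx_mul mulmxV //.
by rewrite trmx1 mulmx1 -(mulmxA _ X) mulmxV // mulmx1.
Qed.

Lemma inner_products1 : inner_products (1%:M : 'M[R]_3).
Proof.
split=> [|x x0]; first exact: trmx1.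
have /existsP[i xi0] : [exists i, x i 0 != 0].
  apply: contraR x0 => /existsPn x_eq0; apply/eqP/colP => i; rewrite mxE.
  exact/eqP/negbNE.
rewrite mulmx1 mxE (bigD1 i) //=.
have sq_gt0 : 0 < x^T 0 i * x i 0 by rewrite mxE lt0r mulf_neq0 //= -expr2 sqr_ge0.
have : 0 <= \sum_(j | j != i) x^T 0 j * x j 0.
  by apply: sumr_ge0 => j _; rewrite mxE -expr2 sqr_ge0.
lra.
Qed.

Lemma RAut_orbit1_sub : RAut_orbit 1%:M `<=` @inner_products R.
Proof.
move=> _ [g /RAutP[ug _ _] <-]; rewrite /gl_act.
by apply: inner_products_congr inner_products1 _; rewrite unitmx_inv.
Qed.

Lemma tangent_vectors_sub (S T : set 'M[R]_3) P :
  S `<=` T -> tangent_vectors S P `<=` tangent_vectors T P.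
Proof. by move=> ST V [c [sc [Sc cP]]]; exists c; split=> //; split=> // t; apply: ST. Qed.

Definition eval_mx (H : 'M[{poly R}]_3) t : 'M[R]_3 := map_mx (horner_eval t) H.

Definition gram_curve (H : 'M[{poly R}]_3) t := (eval_mx H t)^T *m eval_mx H t.

Definition gram_velocity (H : 'M[{poly R}]_3) :=
  let D := eval_mx (map_mx deriv H) 0 in D^T + D.

Lemma gram_curveE H t : gram_curve H t = eval_mx (H^T *m H) t.
Proof. by rewrite /gram_curve /eval_mx map_mxM map_trmx. Qed.

Lemma gram_curve_entry H i j : (fun t => gram_curve H t i j) = horner ((H^T *m H) i j).
Proof. by apply/funext => t; rewrite gram_curveE mxE. Qed.

Lemma smooth_gram_curve H : smooth_curve (gram_curve H).
Proof. by move=> i j; rewrite gram_curve_entry; apply: smooth_horner. Qed.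

Section GramCurve.
Variable H : 'M[{poly R}]_3.
Hypotheses (H_trig : is_trig_mx H) (H_diag : forall t i, (H i i).[t] != 0).
Hypothesis H_at0 : eval_mx H 0 = 1%:M.

Lemma eval_mx_trig t : is_trig_mx (eval_mx H t).
Proof.
by apply/is_trig_mxP => i j lt_ij; rewrite mxE (is_trig_mxP H_trig) // horner_evalE horner0.
Qed.

Lemma eval_mx_unit t : eval_mx H t \in unitmx.
Proof. by rewrite trig_unitmx ?eval_mx_trig //; apply/forallP => i; rewrite mxE H_diag. Qed.

Lemma velocity_gram_curve : velocity (gram_curve H) 0 = gram_velocity H.
Proof.
have -> : velocity (gram_curve H) 0 = eval_mx (map_mx deriv (H^T *m H)) 0.
  by apply/matrixP => i j; rewrite !mxE gram_curve_entry -derivE mxE.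
rewrite deriv_mulmx -map_trmx /eval_mx map_mxD !map_mxM -!map_trmx.
by rewrite -[map_mx (horner_eval 0) H]/(eval_mx H 0) H_at0 trmx1 mulmx1 mul1mx.
Qed.

Lemma gram_curve_inner_products t : inner_products (gram_curve H t).
Proof.
rewrite /gram_curve -[(eval_mx H t)^T]mulmx1.
exact: inner_products_congr inner_products1 (eval_mx_unit t).
Qed.

Lemma gram_velocity_tangent_inner_products :
  tangent_vectors (@inner_products R) 1%:M (gram_velocity H).
Proof.
exists (gram_curve H); split; first exact: smooth_gram_curve.
split; first exact: gram_curve_inner_products.
by rewrite velocity_gram_curve /gram_curve H_at0 trmx1 mulmx1.
Qed.

Hypothesis H_diag12 : H i1 i1 = H i2 i2.

Lemma gram_velocity_tangent_orbit : tangent_vectors (RAut_orbit 1%:M) 1%:M (gram_velocity H).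
Proof.
exists (gram_curve H); split; first exact: smooth_gram_curve.
split; last by rewrite velocity_gram_curve /gram_curve H_at0 trmx1 mulmx1.
move=> t; have uE := eval_mx_unit t; have tE := eval_mx_trig t.
exists (invmx (eval_mx H t)); last by rewrite /gl_act invmxK mulmx1.
apply/RAutP; split; [by rewrite unitmx_inv | exact: trig_invmx |].
by rewrite !trig_invmx_diag // !mxE H_diag12.
Qed.

End GramCurve.

(* A polynomial stand-in for exp: nowhere zero, with value and slope 1 at 0. *)
Definition quad_exp : {poly R} := 1 + 'X + 'X^2.

Definition diag3 (a b c : {poly R}) := mx3 a 0 0 0 b 0 0 0 c.

Definition unitri3 (x y z : {poly R}) := mx3 1 0 0 x 1 0 y z 1.

Definition deriv_at0 (p : {poly R}) := p^`().[0].

Definition unital_nowhere0 (p : {poly R}) := p.[0] = 1 /\ forall t, p.[t] != 0.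

Lemma unital_nowhere0_1 : unital_nowhere0 1.
Proof. by split=> [|t]; rewrite hornerC ?oner_neq0. Qed.

Lemma unital_nowhere0_quad_exp : unital_nowhere0 quad_exp.
Proof.
rewrite /quad_exp; split=> [|t]; rewrite !hornerE; first by rewrite expr0n /= !addr0.
by apply/eqP => q0; nra.
Qed.

Lemma deriv_at0_0 : deriv_at0 0 = 0. Proof. by rewrite /deriv_at0 deriv0 horner0. Qed.
Lemma deriv_at0_1 : deriv_at0 1 = 0. Proof. by rewrite /deriv_at0 derivC horner0. Qed.
Lemma deriv_at0_X : deriv_at0 'X = 1. Proof. by rewrite /deriv_at0 derivX hornerC. Qed.
Lemma deriv_at0_quad_exp : deriv_at0 quad_exp = 1.
Proof. by rewrite /deriv_at0 /quad_exp !poly.derivE !hornerE /= !addr0. Qed.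

Lemma gram_velocity_mx3 (a b c d e f g h k : {poly R}) :
  gram_velocity (mx3 a b c d e f g h k) =
  mx3 (deriv_at0 a + deriv_at0 a) (deriv_at0 d + deriv_at0 b) (deriv_at0 g + deriv_at0 c)
      (deriv_at0 b + deriv_at0 d) (deriv_at0 e + deriv_at0 e) (deriv_at0 h + deriv_at0 f)
      (deriv_at0 c + deriv_at0 g) (deriv_at0 f + deriv_at0 h) (deriv_at0 k + deriv_at0 k).
Proof. by apply/matrixP => i j; rewrite !mxE; case3 i; case3 j. Qed.

Lemma diag3_tangent_inner_products (a b c : {poly R}) :
  unital_nowhere0 a -> unital_nowhere0 b -> unital_nowhere0 c ->
  tangent_vectors (@inner_products R) 1%:M (gram_velocity (diag3 a b c)).
Proof.
move=> [a0 a_neq0] [b0 b_neq0] [c0 c_neq0].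
apply: gram_velocity_tangent_inner_products; first by apply/trig3P; rewrite !mxE.
  by move=> t i; case3 i; rewrite mxE.
by apply/matrixP => i j; rewrite !mxE; case3 i; case3 j; rewrite /= horner_evalE ?horner0.
Qed.

Lemma diag3_tangent_orbit (a b : {poly R}) : unital_nowhere0 a -> unital_nowhere0 b ->
  tangent_vectors (RAut_orbit 1%:M) 1%:M (gram_velocity (diag3 a b b)).
Proof.
move=> [a0 a_neq0] [b0 b_neq0].
apply: gram_velocity_tangent_orbit; first by apply/trig3P; rewrite !mxE.
- by move=> t i; case3 i; rewrite mxE.
- by apply/matrixP => i j; rewrite !mxE; case3 i; case3 j; rewrite /= horner_evalE ?horner0.
- by rewrite !mxE.
Qed.

Lemma unitri3_tangent_orbit (x y z : {poly R}) : x.[0] = 0 -> y.[0] = 0 -> z.[0] = 0 ->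
  tangent_vectors (RAut_orbit 1%:M) 1%:M (gram_velocity (unitri3 x y z)).
Proof.
move=> x0 y0 z0; apply: gram_velocity_tangent_orbit; first by apply/trig3P; rewrite !mxE.
- by move=> t i; case3 i; rewrite mxE /= hornerC oner_neq0.
- by apply/matrixP => i j; rewrite !mxE; case3 i; case3 j; rewrite /= horner_evalE ?hornerC ?horner0.
- by rewrite !mxE.
Qed.

Definition orbit_curves : seq 'M[{poly R}]_3 :=
  [:: diag3 quad_exp 1 1; diag3 1 quad_exp quad_exp;
      unitri3 'X 0 0; unitri3 0 'X 0; unitri3 0 0 'X].

Definition inner_products_curves : seq 'M[{poly R}]_3 :=
  [:: diag3 quad_exp 1 1; diag3 1 quad_exp 1; diag3 1 1 quad_exp;
      unitri3 'X 0 0; unitri3 0 'X 0; unitri3 0 0 'X].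

Lemma orbit_curves_tangent V : V \in map gram_velocity orbit_curves ->
  tangent_vectors (RAut_orbit 1%:M) 1%:M V.
Proof.
move=> /mapP[H /(nthP 0)[k lt_k <-] ->]; have u1 := unital_nowhere0_1.
have uq := unital_nowhere0_quad_exp.
case: k lt_k => [|[|[|[|[|k]]]]] //= _.
- exact: diag3_tangent_orbit.
- exact: diag3_tangent_orbit.
all: by apply: unitri3_tangent_orbit; rewrite ?hornerX ?horner0.
Qed.

Lemma inner_products_curves_tangent V : V \in map gram_velocity inner_products_curves ->
  tangent_vectors (@inner_products R) 1%:M V.
Proof.
move=> /mapP[H /(nthP 0)[k lt_k <-] ->]; have u1 := unital_nowhere0_1.
have uq := unital_nowhere0_quad_exp.
case: k lt_k => [|[|[|[|[|[|k]]]]]] //= _.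
- exact: diag3_tangent_inner_products.
- exact: diag3_tangent_inner_products.
- exact: diag3_tangent_inner_products.
all: apply: tangent_vectors_sub RAut_orbit1_sub _ _.
all: by apply: unitri3_tangent_orbit; rewrite ?hornerX ?horner0.
Qed.

Local Ltac entry_witness :=
  move=> [[|[|[|[|[|[|?]]]]]] ?] // [[|[|[|[|[|[|?]]]]]] ?] //=;
  rewrite gram_velocity_mx3 !mxE /= ?(deriv_at0_0, deriv_at0_1, deriv_at0_X, deriv_at0_quad_exp);
  by rewrite ?(addr0, add0r, eqxx, oner_eq0) -?mulr2n ?pnatr_eq0.

Lemma free_orbit_basis : free (map gram_velocity orbit_curves).
Proof.
apply: (free_entry_witness (s := map_tuple gram_velocity (in_tuple orbit_curves))
  (e := fun i => nth (i0, i0) [:: (i0, i0); (i1, i1); (i1, i0); (i2, i0); (i2, i1)] i)).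
entry_witness.
Qed.

Lemma free_inner_products_basis : free (map gram_velocity inner_products_curves).
Proof.
apply: (free_entry_witness (s := map_tuple gram_velocity (in_tuple inner_products_curves))
  (e := fun i => nth (i0, i0) [:: (i0, i0); (i1, i1); (i2, i2); (i1, i0); (i2, i0); (i2, i1)] i)).
entry_witness.
Qed.

Lemma gl_act_sym g P : P^T = P -> (gl_act g P)^T = gl_act g P.
Proof. by move=> sP; rewrite /gl_act !trmx_mul trmxK sP mulmxA. Qed.

(* With h = (invmx g) i2 i2, the action multiplies Q i2 i2 by h^2 and minor12 Q by h^4. *)
Lemma gl_act_minor12 Q g : Q^T = Q -> RAut g ->
  gl_act g Q i2 i2 ^+ 2 * minor12 Q = Q i2 i2 ^+ 2 * minor12 (gl_act g Q).
Proof.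
move=> sQ /RAutP[ug tg g11]; have sym i j := sym_mxE i j sQ.
have /trig3P[h01 h02 h12] := trig_invmx ug tg.
have h11 : invmx g i2 i2 = invmx g i1 i1 by rewrite !trig_invmx_diag // g11.
rewrite /minor12 /gl_act !mulmx3E !mxE h01 h02 h12 h11 (sym i1 i2) (sym i0 i1) (sym i0 i2).
ring.
Qed.

(* \tr (orbit_normal Q *m V) is - Q i2 i2 ^+ 4 times the derivative at Q of the
   invariant minor12 Q / Q i2 i2 ^+ 2 in the direction V. *)
Definition orbit_normal Q : 'M[R]_3 :=
  mx3 0 0 0 0 (- Q i2 i2 ^+ 3) 0 0 (2 * Q i2 i2 ^+ 2 * Q i1 i2)
      (2 * Q i2 i2 * minor12 Q - Q i2 i2 ^+ 2 * Q i1 i1).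

Lemma mxtrace_orbit_normal Q V : \tr (orbit_normal Q *m V) =
  - Q i2 i2 ^+ 3 * V i1 i1 + 2 * Q i2 i2 ^+ 2 * Q i1 i2 * V i1 i2 +
  (2 * Q i2 i2 * minor12 Q - Q i2 i2 ^+ 2 * Q i1 i1) * V i2 i2.
Proof.
by rewrite mxtrace3E !mulmx3E !mxE /=; ring.
Qed.

Lemma tangent_orbit_sym_perp Q V : inner_products Q ->
  tangent_vectors (RAut_orbit Q) Q V -> sym_perp (orbit_normal Q) V.
Proof.
move=> [sQ _] [c [sc [orb_c [c0 <-]]]].
have csym s i j : c s j i = c s i j.
  by have [g _ <-] := orb_c s; exact: sym_mxE _ _ (gl_act_sym g sQ).
split; first by apply/matrixP => i j; rewrite !mxE; congr derive1; apply/funext => s.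
have d i j : derivable (fun s => c s i j) 0 1 := sc i j 0%N 0.
have d22 := derivable1M (d i2 i2) (d i2 i2).
have d1122 := derivable1M (d i1 i1) (d i2 i2).
have d1212 := derivable1M (d i1 i2) (d i1 i2).
have dminor := derivable1B d1122 d1212.
have invariant : (fun s => minor12 Q * (c s i2 i2 * c s i2 i2) -
    Q i2 i2 ^+ 2 * (c s i1 i1 * c s i2 i2 - c s i1 i2 * c s i1 i2)) = cst 0.
  apply/funext => s; have [g Rg cs] := orb_c s.
  move: (gl_act_minor12 sQ Rg); rewrite cs => invariant_s.
  by apply/eqP; rewrite /= subr_eq0 mulrC -expr2 invariant_s /minor12 !expr2.
have := derive1_cst (0 : R) 0; rewrite -invariant.
rewrite (derive1B (derivable1Ml (a := minor12 Q) d22) (derivable1Ml (a := Q i2 i2 ^+ 2) dminor)).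
rewrite (derive1Ml _ d22) (derive1Ml _ dminor) (derive1B d1122 d1212).
rewrite (derive1M (d i2 i2) (d i2 i2)) (derive1M (d i1 i1) (d i2 i2)).
rewrite (derive1M (d i1 i2) (d i1 i2)) c0 => tangency.
by rewrite mxtrace_orbit_normal !mxE -[RHS]tangency /minor12; ring.
Qed.

Lemma tangent_inner_products_sym P V :
  tangent_vectors (@inner_products R) P V -> sym_perp 0 V.
Proof.
move=> [c [_ [pd_c [_ <-]]]]; split; last by rewrite mul0mx mxtrace0.
apply/matrixP => i j; rewrite !mxE; congr derive1; apply/funext => s.
exact: sym_mxE _ _ (pd_c s).1.
Qed.

Lemma orbit_tangent_free_size Q (s : seq 'M[R]_3) : inner_products Q -> free s ->
  (forall V, V \in s -> tangent_vectors (RAut_orbit Q) Q V) -> (size s <= 5)%N.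
Proof.
move=> pdQ fs sT; apply: (sym_perp_free_size (W := orbit_normal Q)
  (idx := fun j => nth (i0, i0) [:: (i0, i0); (i0, i1); (i0, i2); (i1, i2); (i2, i2)] j)) fs _;
  last by move=> V /sT; apply: tangent_orbit_sym_perp.
move=> V [sV tV] V0.
move: (V0 (@Ordinal 5 0 isT)) (V0 (@Ordinal 5 1 isT)) (V0 (@Ordinal 5 2 isT)).
move: (V0 (@Ordinal 5 3 isT)) (V0 (@Ordinal 5 4 isT)) => /= v12 v22 v00 v01 v02.
have sym i j := sym_mxE i j sV.
have v11 : V i1 i1 = 0.
  move: tV; rewrite mxtrace_orbit_normal v12 v22 !mulr0 !addr0 => /eqP.
  by rewrite mulf_eq0 oppr_eq0 expf_eq0 /= (gt_eqF (inner_products_diag_gt0 i2 pdQ)) => /eqP.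
by apply/matrixP => i j; rewrite mxE; case3 i; case3 j; rewrite // sym.
Qed.

Lemma inner_products_tangent_free_size P (s : seq 'M[R]_3) : free s ->
  (forall V, V \in s -> tangent_vectors (@inner_products R) P V) -> (size s <= 6)%N.
Proof.
move=> fs sT; apply: (sym_perp_free_size (W := 0) (idx := fun j =>
  nth (i0, i0) [:: (i0, i0); (i0, i1); (i0, i2); (i1, i1); (i1, i2); (i2, i2)] j)) fs _;
  last by move=> V /sT; apply: tangent_inner_products_sym.
move=> V [sV _] V0; have sym i j := sym_mxE i j sV.
move: (V0 (@Ordinal 6 0 isT)) (V0 (@Ordinal 6 1 isT)) (V0 (@Ordinal 6 2 isT)).
move: (V0 (@Ordinal 6 3 isT)) (V0 (@Ordinal 6 4 isT)) (V0 (@Ordinal 6 5 isT)) => /=.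
by move=> ? ? ? ? ? ?; apply/matrixP => i j; rewrite mxE; case3 i; case3 j; rewrite // sym.
Qed.

Lemma r3_cohomogeneity_one : cohomogeneity_one R.
Proof.
exists 1%:M, 5%N, 6%N; split; first exact: inner_products1.
split.
  split; last by move=> s; apply: orbit_tangent_free_size inner_products1.
  exists (map gram_velocity orbit_curves); split=> //.
  by split; [exact: free_orbit_basis | exact: orbit_curves_tangent].
split.
  split; last by move=> s; apply: inner_products_tangent_free_size.
  exists (map gram_velocity inner_products_curves); split=> //.
  by split; [exact: free_inner_products_basis | exact: inner_products_curves_tangent].
split=> //.
by move=> Q k pdQ [[s [<- [fs sT]]] _]; apply: orbit_tangent_free_size pdQ fs sT.
Qed.

End R3.

Theorem lemma5p1 (R : realType) :
  cohomogeneity_one R /\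
  (forall P Q : 'M[R]_3, inner_products P -> inner_products Q ->
     isom_congruent (RAut_orbit P) (RAut_orbit Q)).
Proof. split; [exact: r3_cohomogeneity_one | exact: RAut_orbits_isom_congruent]. Qed.
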